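(* Let $d\ge1$ be fixed, let $P$ be a set of $n\ge2$ points in $\mathbb{R}^d$, let $\varepsilon\in(0,1)$, and let $q\in\mathbb{R}^d$ be a query point. Consider the greedy permutation graph $G$ built with parameter $\varepsilon/4$ and the greedy routing procedure for $q$ run with parameter $\varepsilon/4$, as described in the context. If an edge $p_j\to p_i$ is inspected by the procedure, $d(q,p_j)<d(q,p_i)$, and $r_i<(\varepsilon/8)\,d(q,p_j)$, then $p_j$ is a $(1+\varepsilon)$-approximate nearest neighbor of $q$ in $P$, i.e., $d(q,p_j)\le(1+\varepsilon)\min_{p\in P}d(q,p)$.
   Context: Distances are Euclidean. Greedy permutation: $p_1\in P$ is arbitrary; for $i\ge2$, $p_i$ is a point of $P\setminus P_{i-1}$ furthest from $P_{i-1}=\{p_1,\dots,p_{i-1}\}$. Radii: $r_1=\max_{p\in P}d(p,p_1)$ and $r_{i-1}=d(p_i,P_{i-1})$ for $i\ge2$ (so every point of $P$ is within distance $r_i$ of $P_i$). For a parameter $\delta\in(0,1/2)$, the graph built with parameter $\delta$ has edges $p_j\to p_i$ for all $i\ge2$ and all $p_j\in P_{i-1}$ with $d(p_j,p_i)\le 8r_{i-1}/\delta$; outgoing edges of each vertex are ordered by increasing index of the destination. The greedy routing procedure with parameter $\delta$: set $c=p_1$; scan the outgoing edges $c\to p_j$ in increasing order of $j$, and as soon as $d(q,p_j)\le(1-\delta/4)d(q,c)$, set $c=p_j$ and restart scanning from the new $c$; if all outgoing edges of $c$ are scanned without a move, return $c$. Here $\delta=\varepsilon/4$. *)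

From HB Require Import structures.
From mathcomp Require Import all_boot all_order all_algebra.
From mathcomp Require Import reals.
Set Implicit Arguments. Unset Strict Implicit. Unset Printing Implicit Defensive.
Import Order.TTheory GRing.Theory Num.Theory.
Local Open Scope ring_scope.

Section Greedy.
Variables (R : realType) (d : nat).
Notation point := 'rV[R]_d.

Definition edist (x y : point) : R :=
  Num.sqrt (\sum_(k < d) (x 0 k - y 0 k) ^+ 2).

(* The points are p 1, ..., p n (1-indexed as in the paper);
   P = {p 1, ..., p n}, P_i = {p 1, ..., p i}. *)
Variables (p : nat -> point) (n : nat).

Definition distP (i : nat) (x : point) : R :=
  \big[Num.min/edist (p 1) x]_(1 <= k < i.+1) edist (p k) x.

(* p is a greedy permutation of the n-point set P = {p 1, ..., p n}:
   the p k are pairwise distinct, and for 2 <= i <= n, p i is a point of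
   P \ P_{i-1} furthest from P_{i-1}  (p 1 arbitrary). *)
Definition greedy_perm : Prop :=
  (forall j k, 1 <= j <= n -> 1 <= k <= n -> p j = p k -> j = k)%N /\
  (forall i k, (2 <= i)%N -> (i <= k <= n)%N ->
      distP i.-1 (p k) <= distP i.-1 (p i)).

(* Radii: r_{i-1} = d(p_i, P_{i-1}) for 2 <= i <= n (this also equals r_1 =
   max_p d(p, p_1) for a greedy permutation); convention r_n = 0 (every point
   of P = P_n is within distance 0 of P_n). *)
Definition radius (i : nat) : R :=
  if (i < n)%N then distP i (p i.+1) else 0.

Variable delta : R.

Definition gedge (j i : nat) : Prop :=
  (2 <= i <= n)%N /\ (1 <= j < i)%N /\
  edist (p j) (p i) <= 8 * radius i.-1 / delta.

Variable q : point.

Definition improving (c k : nat) : Prop :=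
  edist q (p k) <= (1 - delta / 4) * edist q (p c).

(* Vertices that become the current vertex c during the greedy routing
   procedure: start at p 1; from c, the scan (in increasing destination
   index) moves to the first out-neighbour k that is improving. *)
Inductive visited : nat -> Prop :=
| visited_start : visited 1
| visited_step c k : visited c -> gedge c k -> improving c k ->
    (forall k', (k' < k)%N -> gedge c k' -> ~ improving c k') -> visited k.

Definition inspected (c i : nat) : Prop :=
  visited c /\ gedge c i /\
  (forall k', (k' < i)%N -> gedge c k' -> ~ improving c k').

End Greedy.

From Pilot Require Import Defs.
From mathcomp Require Import all_boot all_order all_algebra.
From mathcomp Require Import reals.
From mathcomp Require Import ring lra.
Import Order.TTheory GRing.Theory Num.Theory.
Local Open Scope ring_scope.
Set Implicit Arguments. Unset Strict Implicit. Unset Printing Implicit Defensive.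

(* Suppose p_j is not a (1 + eps)-approximate nearest neighbour of q and let
   p_s be a nearest one.  As r_i is small, some p_l with l <= i lies within r_i
   of p_s, so moving from p_j to p_l would shrink the distance to q by the
   factor 1 - eps/16.  Let m be the least index of such an improving point.
   While the route stays far from q, no point preceding the current vertex
   improves on it, so j < m <= l <= i, and m <> i because p_i is farther from q
   than p_j.  By the greedy property r_{m-1} >= d(p_k, p_s) for some k < m, and
   as p_k does not improve on p_j this is at least (7 eps/16) d(q, p_j); so the
   edge p_j -> p_m exists and the scan from p_j moves to p_m before it reaches
   p_j -> p_i. *)

Lemma CauchySchwarz_sum (R : rcfType) (I : finType) (a b : I -> R) :
  (\sum_i a i * b i) ^+ 2 <= (\sum_i a i ^+ 2) * (\sum_i b i ^+ 2).
Proof.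
have lagrange : \sum_i \sum_j (a i * b j - a j * b i) ^+ 2 =
    2 * ((\sum_i a i ^+ 2) * (\sum_i b i ^+ 2) - (\sum_i a i * b i) ^+ 2).
  have -> : \sum_i \sum_j (a i * b j - a j * b i) ^+ 2 =
      \sum_i \sum_j a i ^+ 2 * b j ^+ 2 + \sum_i \sum_j b i ^+ 2 * a j ^+ 2
      - 2 * \sum_i \sum_j (a i * b i) * (a j * b j).
    rewrite mulr_sumr -big_split -sumrB /=; apply: eq_bigr => i _.
    by rewrite mulr_sumr -big_split -sumrB /=; apply: eq_bigr => j _; ring.
  by rewrite -!big_distrlr /=; ring.
have : 0 <= \sum_i \sum_j (a i * b j - a j * b i) ^+ 2.
  by do 2![apply: sumr_ge0 => ? _]; exact: sqr_ge0.
by rewrite lagrange pmulr_rge0 // subr_ge0.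
Qed.

Lemma sqrt_sum_sqrD_le (R : rcfType) (I : finType) (a b : I -> R) :
  Num.sqrt (\sum_i (a i + b i) ^+ 2) <=
  Num.sqrt (\sum_i a i ^+ 2) + Num.sqrt (\sum_i b i ^+ 2).
Proof.
set A := \sum_i a i ^+ 2; set B := \sum_i b i ^+ 2; set C := \sum_i a i * b i.
have A_ge0 : 0 <= A by apply: sumr_ge0 => i _; exact: sqr_ge0.
have B_ge0 : 0 <= B by apply: sumr_ge0 => i _; exact: sqr_ge0.
have -> : \sum_i (a i + b i) ^+ 2 = A + B + 2 * C.
  by rewrite mulr_sumr -!big_split /=; apply: eq_bigr => i _; ring.
have C_le : C <= Num.sqrt A * Num.sqrt B.
  rewrite -sqrtrM // (le_trans (ler_norm C)) // -sqrtr_sqr.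
  exact/ler_wsqrtr/CauchySchwarz_sum.
rewrite -[leRHS]ger0_norm ?addr_ge0 ?sqrtr_ge0 // -sqrtr_sqr.
by apply: ler_wsqrtr; rewrite sqrrD !sqr_sqrtr //; lra.
Qed.

Section EuclideanDistance.
Variables (R : realType) (d : nat).
Implicit Types x y z : 'rV[R]_d.

Lemma edist_ge0 x y : 0 <= edist x y.
Proof. exact: sqrtr_ge0. Qed.

Lemma edistC x y : edist x y = edist y x.
Proof. by congr Num.sqrt; apply: eq_bigr => k _; rewrite -sqrrN opprB. Qed.

Lemma edistxx x : edist x x = 0.
Proof. by rewrite /edist big1 ?sqrtr0 // => k _; rewrite subrr expr0n. Qed.

Lemma edist_triangle x y z : edist x z <= edist x y + edist y z.
Proof.
rewrite /edist; under eq_bigr => k _ do rewrite -(subrKA (y 0 k)).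
exact: sqrt_sum_sqrD_le.
Qed.

End EuclideanDistance.

Section NearestDistance.
Variables (R : realType) (d : nat) (p : nat -> 'rV[R]_d).

Lemma distP_attained i x : (1 <= i)%N ->
  exists2 k, (1 <= k <= i)%N & distP p i x = edist (p k) x.
Proof.
move=> i_ge1; rewrite /distP big_seq.
elim/big_ind: _ => [|_ _ [k1 k1_in ->] [k2 k2_in ->]|k].
- by exists 1%N; rewrite ?i_ge1.
- by rewrite minEle; case: ifP => _; [exists k1 | exists k2].
- by rewrite mem_index_iota ltnS => k_in; exists k.
Qed.

Lemma distP_ge0 i x : (1 <= i)%N -> 0 <= distP p i x.
Proof. by move=> /(distP_attained x)[k _ ->]; exact: edist_ge0. Qed.

End NearestDistance.

Section GreedyCover.
Variables (R : realType) (d : nat) (p : nat -> 'rV[R]_d) (n : nat).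
Hypothesis greedy : greedy_perm p n.

Lemma radius_ge0 i : (1 <= i)%N -> 0 <= radius p n i.
Proof. by move=> i_ge1; rewrite /radius; case: ifP => // _; exact: distP_ge0. Qed.

Lemma radius_cover_later i s : (1 <= i)%N -> (i < s <= n)%N ->
  exists2 k, (1 <= k <= i)%N & edist (p k) (p s) <= radius p n i.
Proof.
move=> i_ge1 /andP[i_lt_s s_le_n]; have [k k_in dist_k] := distP_attained p (p s) i_ge1.
exists k => //; rewrite -dist_k /radius (leq_trans i_lt_s s_le_n).
by apply: (proj2 greedy i.+1 s); rewrite ?i_lt_s.
Qed.

Lemma radius_cover i s : (1 <= i)%N -> (1 <= s <= n)%N ->
  exists2 k, (1 <= k <= i)%N & edist (p k) (p s) <= radius p n i.
Proof.
move=> i_ge1 /andP[s_ge1 s_le_n]; case: (leqP s i) => [s_le_i | i_lt_s].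
  by exists s; rewrite ?s_ge1 // edistxx radius_ge0.
by apply: radius_cover_later; rewrite ?i_lt_s.
Qed.

End GreedyCover.

Section GreedyRouting.
Variables (R : realType) (d : nat) (p : nat -> 'rV[R]_d) (n : nat).
Variables (eps : R) (q : 'rV[R]_d) (s : nat).
Hypotheses (eps01 : 0 < eps < 1) (greedy : greedy_perm p n) (s_in : (1 <= s <= n)%N).

Local Notation dq k := (edist q (p k)).
Local Notation improving := (improving p (eps / 4) q).
Local Notation gedge := (gedge p n (eps / 4)).
Local Notation far c := ((1 + eps) * dq s < dq c).

Definition no_earlier_improving (c : nat) : Prop :=
  forall l, (1 <= l < c)%N -> (l <= n)%N -> ~ improving c l.

Lemma improving_le c k : improving c k -> dq k <= dq c.
Proof.
have /andP[eps_gt0 _] := eps01.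
by move/le_trans; apply; rewrite ler_piMl ?edist_ge0 //; lra.
Qed.

Lemma improving_trans c k l : improving c k -> improving k l -> improving c l.
Proof.
have /andP[eps_gt0 eps_lt1] := eps01.
move=> /improving_le ck; rewrite /Defs.improving => /le_trans; apply.
by rewrite ler_wpM2l //; lra.
Qed.

Lemma far_improving_irrefl c : far c -> ~ improving c c.
Proof.
have /andP[eps_gt0 _] := eps01.
move=> far_c; apply/negP; rewrite -ltNge; have := edist_ge0 q (p s); nra.
Qed.

Lemma far_nn_dist_le c : far c -> dq s <= (1 - eps / 2) * dq c.
Proof.
have /andP[eps_gt0 eps_lt1] := eps01.
move=> far_c; have ds_ge0 := edist_ge0 q (p s).
have : 0 <= (1 - eps / 2) * (dq c - (1 + eps) * dq s) by rewrite mulr_ge0 //; lra.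
have : 0 <= eps * (1 - eps) * dq s by rewrite !mulr_ge0 //; lra.
nra.
Qed.

Lemma far_improving_nn c : far c -> improving c s.
Proof.
have /andP[eps_gt0 _] := eps01.
move=> /far_nn_dist_le /le_trans; apply.
by rewrite ler_wpM2r ?edist_ge0 //; lra.
Qed.

Lemma first_improving_gedge c m : (1 <= c < m)%N -> (m <= n)%N -> far c ->
  improving c m -> (forall k, (1 <= k <= n)%N -> improving c k -> (m <= k)%N) ->
  gedge c m.
Proof.
have /andP[eps_gt0 _] := eps01.
move=> /andP[c_ge1 c_lt_m] m_le_n far_c impr_m m_min.
have s_le_n := proj2 (andP s_in).
have m_ge2 : (2 <= m)%N by apply: leq_ltn_trans c_lt_m.
have m_le_s : (m <= s)%N by apply: m_min => //; exact: far_improving_nn.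
have m_gt0 : (0 < m)%N := ltnW m_ge2.
have [k /andP[k_ge1 k_le] rad_k] : exists2 k, (1 <= k <= m.-1)%N &
    edist (p k) (p s) <= radius p n m.-1.
  apply: radius_cover_later => //; first by rewrite -ltnS prednK.
  by rewrite prednK ?m_le_s.
have k_lt_m : (k < m)%N by rewrite -(prednK m_gt0) ltnS.
have far_k : ~ improving c k.
  move=> impr_k; suff : (m <= k)%N by rewrite leqNgt k_lt_m.
  by apply: m_min; rewrite // k_ge1 (leq_trans (ltnW k_lt_m) m_le_n).
have rad_lb : eps / 16 * dq c <= radius p n m.-1.
  have := edist_triangle q (p s) (p k); rewrite [edist (p s) _]edistC.
  have := far_nn_dist_le far_c; move/negP: far_k; rewrite /Defs.improving -ltNge.
  have : 0 <= eps * dq c by rewrite mulr_ge0 ?edist_ge0 // ltW.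
  lra.
have dist_cm : edist (p c) (p m) <= dq c + dq m.
  by rewrite -[dq c]edistC edist_triangle.
have dm_eps : dq m * eps <= dq c * eps by rewrite ler_wpM2r ?improving_le // ltW.
split; first by rewrite m_ge2.
split; first by rewrite c_ge1.
rewrite ler_pdivlMr; last by lra.
apply: le_trans (_ : (dq c + dq m) * (eps / 4) <= _); last by lra.
by rewrite ler_wpM2r //; lra.
Qed.

Lemma exists_improving_gedge c l : (1 <= c)%N -> far c -> no_earlier_improving c ->
  (1 <= l <= n)%N -> improving c l ->
  exists m, [/\ (c < m <= l)%N, gedge c m & improving c m].
Proof.
move=> c_ge1 far_c no_earlier l_in impr_l.
have ex_impr : exists x, (1 <= x <= n)%N && (dq x <= (1 - eps / 4 / 4) * dq c).
  by exists l; rewrite l_in.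
case: (ex_minnP ex_impr) => m /andP[m_in impr_m] m_min.
have m_le_l : (m <= l)%N by apply: m_min; rewrite l_in.
have c_lt_m : (c < m)%N.
  case: (ltngtP c m) => [// | m_lt_c | c_eq_m].
  - by case/andP: m_in => m_ge1 m_le_n; case: (no_earlier m _ m_le_n impr_m); rewrite m_ge1.
  - by case: (far_improving_irrefl far_c); rewrite {2}c_eq_m.
exists m; split => //; first by rewrite c_lt_m.
apply: first_improving_gedge => //; first by rewrite c_ge1.
  by case/andP: m_in.
by move=> k k_in impr_k; apply: m_min; rewrite k_in.
Qed.

Lemma visited_no_earlier_improving k :
  visited p n (eps / 4) q k -> far k -> no_earlier_improving k.
Proof.
elim=> {k} [|c k _ IH ck_edge impr_k k_first] far_k l /andP[l_ge1 l_lt_k] l_le_n impr_l.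
  by move: l_lt_k; rewrite ltnNge l_ge1.
have far_c : far c := lt_le_trans far_k (improving_le impr_k).
have c_ge1 : (1 <= c)%N by case: ck_edge => _ [/andP[]].
have l_in : (1 <= l <= n)%N by rewrite l_ge1.
have [m [/andP[_ m_le_l] cm_edge impr_m]] :=
  exists_improving_gedge c_ge1 far_c (IH far_c) l_in (improving_trans impr_k impr_l).
exact: k_first m (leq_ltn_trans m_le_l l_lt_k) cm_edge impr_m.
Qed.

End GreedyRouting.

Theorem claim4p5 (R : realType) (d : nat) (p : nat -> 'rV[R]_d) (n : nat)
    (eps : R) (q : 'rV[R]_d) (i j : nat) :
  (1 <= d)%N -> (2 <= n)%N -> 0 < eps < 1 ->
  greedy_perm p n ->
  inspected p n (eps / 4) q j i ->
  edist q (p j) < edist q (p i) ->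
  radius p n i < (eps / 8) * edist q (p j) ->
  edist q (p j) <= (1 + eps) * distP p n q.
Proof.
move=> _ n_ge2 eps01 greedy [j_visited [ji_edge ji_first]] ji_far r_small.
have [/andP[i_ge2 i_le_n] [/andP[j_ge1 j_lt_i] _]] := ji_edge.
have [s s_in ->] := distP_attained p q (ltnW n_ge2).
rewrite [edist (p s) q]edistC leNgt; apply/negP => far_j.
have [l /andP[l_ge1 l_le_i] l_near] := radius_cover greedy (ltnW i_ge2) s_in.
have impr_l : improving p (eps / 4) q j l.
  have /andP[eps_gt0 _] := eps01.
  have := edist_triangle q (p s) (p l); rewrite [edist (p s) _]edistC.
  have := far_nn_dist_le eps01 far_j.
  have : 0 <= eps * edist q (p j) by rewrite mulr_ge0 ?edist_ge0 // ltW.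
  rewrite /improving; lra.
have l_in : (1 <= l <= n)%N by rewrite l_ge1 (leq_trans l_le_i).
have no_earlier := visited_no_earlier_improving eps01 greedy s_in j_visited far_j.
have [m [/andP[_ m_le_l] jm_edge impr_m]] :=
  exists_improving_gedge eps01 greedy s_in j_ge1 far_j no_earlier l_in impr_l.
have m_lt_i : (m < i)%N.
  rewrite ltn_neqAle (leq_trans m_le_l l_le_i) andbT.
  by apply/eqP=> m_eq_i; move: impr_m; rewrite m_eq_i => /(improving_le eps01); rewrite leNgt ji_far.
exact: ji_first m m_lt_i jm_edge impr_m.
Qed.
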